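(* Let $d\le\ell$ be positive integers and $L\ge2$. In an $L$-graph $\mathcal G$ with a $(p,n,d)$-non-backtracking multi-labelling $\mathcal L$, the number of $T_4$ edges is at most $12\,\bar\Delta(\mathcal L)\,\ell$.
   Context: An $L$-graph is a cycle with $2L$ vertices alternating between $n$-vertices and $p$-vertices. A $(p,n,d)$-non-backtracking multi-labelling assigns an $n$-label in $[n]$ to each $n$-vertex and a tuple of $d$ distinct $p$-labels in $[p]$ to each $p$-vertex ($d\le\ell$) such that (i) each $n$-vertex's label differs from those of the $n$-vertices immediately preceding and following it, and each $p$-vertex's tuple differs (up to reordering) from those of the $p$-vertices immediately preceding and following it; (ii) for each $n$-label $i$ and $p$-label $j$ the number of edges with $n$-endpoint labelled $i$ and $p$-endpoint's tuple containing $j$ is even. With $\tilde r,\tilde c$ the numbers of distinct $n$- and $p$-labels, $\bar\Delta(\mathcal L)=1+\frac L2+\frac{dL}{2\ell}-\tilde r-\frac{\tilde c}{\ell}$. Fix a starting $p$-vertex and orientation. For an edge between an $n$-vertex labelled $i$ and a $p$-vertex with tuple $(j_1,\dots,j_d)$, its sub-edges are the pairs $(i,j_k)$ in traversal order; a sub-edge is $t_1$ if the label at its later endpoint has not previously appeared on a vertex of that kind, $t_3$ if the same label pair has occurred exactly once before as a sub-edge and that occurrence was $t_1$, and $t_4$ otherwise. An edge is $T_1$ if all its sub-edges are $t_1$, $T_3$ if all are $t_3$, and $T_4$ otherwise. *)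

From mathcomp Require Import all_boot all_order all_algebra.
Set Implicit Arguments.
Unset Strict Implicit.
Unset Printing Implicit Defensive.
Import Order.TTheory GRing.Theory Num.Theory.

(* L-graph: cycle  p_0, n_0, p_1, n_1, ..., p_(L-1), n_(L-1), (back to p_0),
   traversed from the fixed starting p-vertex p_0 in this orientation.
   n-vertex n_k carries n-label  nl k : 'I_n,
   p-vertex p_k carries the d-tuple  pl k : d.-tuple 'I_p.
   Edges: (k,false) = {p_k, n_k}   (later endpoint n_k),
          (k,true)  = {n_k, p_(k+1 mod L)}  (later endpoint p_(k+1 mod L)). *)

Section LGraph.
Variables (L n p d : nat).
Variable nl : 'I_L -> 'I_n.
Variable pl : 'I_L -> d.-tuple 'I_p.

Definition edge := ('I_L * bool)%type.

Definition edge_rank (e : edge) : nat := 2 * e.1 + e.2.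

Definition edge_n (e : edge) : 'I_n := nl e.1.
Definition edge_p (e : edge) : d.-tuple 'I_p :=
  if e.2 then pl (ordS e.1) else pl e.1.

Definition nb_multilabelling : Prop :=
  [/\ (forall k, uniq (pl k)),
      (forall k, nl k != nl (ordS k)),
      (forall k, ~~ perm_eq (pl k) (pl (ordS k))) &
      (forall (i : 'I_n) (j : 'I_p),
          ~~ odd #|[set e : edge | (edge_n e == i) && (j \in edge_p e)]|)].

(* sub-edges: (e, m) stands for the pair (edge_n e, m-th entry of edge_p e) *)
Definition subedge := (edge * 'I_d)%type.

Definition sub_rank (s : subedge) : nat := edge_rank s.1 * d + s.2.

Definition sub_pair (s : subedge) : 'I_n * 'I_p :=
  (edge_n s.1, tnth (edge_p s.1) s.2).

(* t_1: the label at the later endpoint did not appear on an earlier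
   vertex of the same kind in the traversal *)
Definition is_t1 (s : subedge) : bool :=
  let k := s.1.1 in
  if s.1.2 then
    [forall k' : 'I_L, (k' <= k)%N ==> (tnth (edge_p s.1) s.2 \notin pl k')]
  else
    [forall k' : 'I_L, (k' < k)%N ==> (nl k' != nl k)].

Definition prev_occ (s : subedge) : {set subedge} :=
  [set s' : subedge | (sub_rank s' < sub_rank s)%N & sub_pair s' == sub_pair s].

Definition is_t3 (s : subedge) : bool :=
  ~~ is_t1 s && (#|prev_occ s| == 1%N) && [forall s' in prev_occ s, is_t1 s'].

Definition is_T1 (e : edge) : bool := [forall m : 'I_d, is_t1 (e, m)].
Definition is_T3 (e : edge) : bool := [forall m : 'I_d, is_t3 (e, m)].
Definition is_T4 (e : edge) : bool := ~~ is_T1 e && ~~ is_T3 e.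

Definition num_T4 : nat := #|[set e : edge | is_T4 e]|.

Definition r_tilde : nat := #|[set nl k | k in 'I_L]|.
Definition c_tilde : nat := #|[set j : 'I_p | [exists k : 'I_L, j \in pl k]]|.

Definition Delta_bar (ell : nat) : rat :=
  1 + L%:R / 2 + (d * L)%:R / (2 * ell)%:R - r_tilde%:R - c_tilde%:R / ell%:R.

End LGraph.

From mathcomp Require Import all_boot all_algebra zify ring.
Set Implicit Arguments.
Unset Strict Implicit.
Unset Printing Implicit Defensive.
Import GRing.Theory Num.Theory.

(* Each pair (n-label, p-label) lies on an even number of edges, so the
   first (t_1) occurrence of a pair is always followed by a second one, which
   is t_3: hence #t_1 <= #t_3, and of the 2Ld sub-edges at most 2Ld - 2 #t_1
   are t_4.  A T_4 edge either contains a t_4 sub-edge or is a p-edge mixing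
   t_1 and non-t_1 sub-edges.  The t_1 sub-edges are counted from below by the
   first occurrences of n-labels and by the p-labels missing from p_0.  Parity
   and non-backtracking show that no n-label occurs only once and that an edge
   introducing a new p-label is followed by a later occurrence of its n-label;
   comparing first and last occurrences of n-labels then closes the count. *)

Lemma ltn_mulD_lex (a b x y d : nat) : x < d -> y < d ->
  (a * d + x < b * d + y) = (a < b) || (a == b) && (x < y).
Proof.
move=> xd yd; case: (ltngtP a b) => [ab|ba|<-] /=; last by rewrite ltn_add2l.
- have : a.+1 * d <= b * d by rewrite leq_mul2r ab orbT.
  by nia.
- have : b.+1 * d <= a * d by rewrite leq_mul2r ba orbT.
  by nia.
Qed.

Lemma cardsU_disjoint (T : finType) (A B : {set T}) :
  [disjoint A & B] -> #|A :|: B| = #|A| + #|B|.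
Proof. by move=> dAB; apply/eqP; rewrite (leq_card_setU A B).2. Qed.

Lemma leq_card_disjointU (T : finType) (A B C : {set T}) :
  [disjoint A & B] -> A :|: B \subset C -> #|A| + #|B| <= #|C|.
Proof. by move=> /cardsU_disjoint <- /subset_leq_card. Qed.

Definition first_occ (m : nat) (T : eqType) (f : 'I_m -> T) : {set 'I_m} :=
  [set k : 'I_m | [forall k' : 'I_m, (k' < k) ==> (f k' != f k)]].
Definition last_occ (m : nat) (T : eqType) (f : 'I_m -> T) : {set 'I_m} :=
  [set k : 'I_m | [forall k' : 'I_m, (k < k') ==> (f k' != f k)]].

Lemma card_image_le_first_occ (m : nat) (T : finType) (f : 'I_m -> T) :
  #|[set f k | k in 'I_m]| <= #|first_occ f|.
Proof.
apply: leq_trans (leq_imset_card f _); apply/subset_leq_card/subsetP => _ /imsetP[k _ ->].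
case: (@arg_minnP _ k (fun x => f x == f k) val (eqxx _)) => k0 /eqP fk0 k0_min.
apply/imsetP; exists k0; rewrite ?fk0 // inE.
apply/forall_inP => k' lt_k'; apply/eqP => fk'.
by have := k0_min k'; rewrite fk' fk0 eqxx leqNgt lt_k' => /(_ isT).
Qed.

Lemma card_image_le_last_occ (m : nat) (T : finType) (f : 'I_m -> T) :
  #|[set f k | k in 'I_m]| <= #|last_occ f|.
Proof.
apply: leq_trans (leq_imset_card f _); apply/subset_leq_card/subsetP => _ /imsetP[k _ ->].
case: (@arg_maxnP _ k (fun x => f x == f k) val (eqxx _)) => k0 /eqP fk0 k0_max.
apply/imsetP; exists k0; rewrite ?fk0 // inE.
apply/forall_inP => k' lt_k'; apply/eqP => fk'.
by have := k0_max k'; rewrite fk' fk0 eqxx => /(_ isT) /=; rewrite leqNgt lt_k'.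
Qed.

Lemma mulD_inj (a b x y d : nat) : x < d -> y < d ->
  a * d + x = b * d + y -> a = b /\ x = y.
Proof.
move=> xd yd E; have d_gt0 : 0 < d by case: d xd {yd E}.
split; first by have := congr1 (divn^~ d) E; rewrite /= !divnMDl // !divn_small // !addn0.
by have := congr1 (modn^~ d) E; rewrite /= !modnMDl !modn_small.
Qed.

Section Labelling.
Variables (L n p d : nat) (nl : 'I_L -> 'I_n) (pl : 'I_L -> d.-tuple 'I_p).

Lemma sub_rank_inj : injective (@sub_rank L d).
Proof.
move=> [[k b] m] [[k' b'] m'] /(mulD_inj (ltn_ord m) (ltn_ord m')).
rewrite /edge_rank /= => -[ekb /val_inj ->].
have [ek eb] : k = k' :> nat /\ b = b' by case: b b' ekb => [] [] /=; lia.
by rewrite (val_inj ek) eb.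
Qed.

Lemma sub_rank_ltE (s s' : subedge L d) :
  (sub_rank s' < sub_rank s) =
  (edge_rank s'.1 < edge_rank s.1) || (edge_rank s'.1 == edge_rank s.1) && (s'.2 < s.2).
Proof. exact: ltn_mulD_lex. Qed.

Hypothesis nb : nb_multilabelling nl pl.

Lemma edge_p_uniq e : uniq (edge_p pl e).
Proof. by rewrite /edge_p; case: ifP; case: nb. Qed.

Definition pair_edges (ij : 'I_n * 'I_p) : {set edge L} :=
  [set e | (edge_n nl e == ij.1) && (ij.2 \in edge_p pl e)].

Lemma pair_edges_neq1 ij : #|pair_edges ij| != 1.
Proof. by case: nb => _ _ _ /(_ ij.1 ij.2); apply: contraNneq => ->. Qed.

Lemma mem_pair_edges (s : subedge L d) : s.1 \in pair_edges (sub_pair nl pl s).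
Proof. by rewrite inE eqxx mem_tnth. Qed.

Lemma sub_pair_inj_edge (s s' : subedge L d) :
  s'.1 = s.1 -> sub_pair nl pl s' = sub_pair nl pl s -> s' = s.
Proof.
case: s s' => e m [e' m'] /= -> [E].
by move/tuple_uniqP: (edge_p_uniq e) => /(_ m' m E) ->.
Qed.

Lemma t1_pair_edges_later (s : subedge L d) (e : edge L) :
  is_t1 nl pl s -> e \in pair_edges (sub_pair nl pl s) -> e != s.1 ->
  edge_rank s.1 < edge_rank e.
Proof.
case: s e => [[k b] m] [k' b']; rewrite inE /is_t1 /sub_pair /edge_n /edge_p /edge_rank /=.
rewrite xpair_eqE => t1 /andP[/eqP nl_eq j_in]; rewrite -val_eqE => neq.
rewrite ltnNge; apply/negP => le.
case: b j_in t1 neq le => j_in /forallP t1 neq le.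
- case: b' j_in neq le => j_in neq le; last first.
    by have := t1 k'; rewrite j_in /= implybF; move: le => /=; lia.
  have lt : k' < k by move: neq le; rewrite eqxx andbT /=; lia.
  have ordS_k' : val (ordS k') = k'.+1 by rewrite /= modn_small //; have := ltn_ord k; lia.
  by have := t1 (ordS k'); rewrite ordS_k' lt j_in.
- have lt : k' < k by case: b' j_in neq le => _; rewrite ?andbF ?andbT /=; lia.
  by have := t1 k'; rewrite lt nl_eq eqxx.
Qed.

Lemma t1_prev_occ (s : subedge L d) : is_t1 nl pl s -> prev_occ nl pl s = set0.
Proof.
move=> t1; apply/setP => s'; rewrite !inE; apply/negP => /andP[lt /eqP pair_eq].
have [eq_e | neq_e] := eqVneq s'.1 s.1.
  by move: lt; rewrite (sub_pair_inj_edge eq_e pair_eq) ltnn.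
have := t1_pair_edges_later t1 _ neq_e; rewrite -pair_eq mem_pair_edges => /(_ isT) lt_e.
by move: lt; rewrite sub_rank_ltE ltnNge (ltnW lt_e) /= (gtn_eqF lt_e).
Qed.

Lemma t1_later_twin (s : subedge L d) : is_t1 nl pl s ->
  exists2 s' : subedge L d,
    sub_pair nl pl s' = sub_pair nl pl s & edge_rank s.1 < edge_rank s'.1.
Proof.
move=> t1; have := pair_edges_neq1 (sub_pair nl pl s); have := mem_pair_edges s.
have later := t1_pair_edges_later t1; case: (sub_pair nl pl s) later => i j later s_in card_neq1.
have [e /andP[e_in neq_e] | none] := pickP [pred e | (e \in pair_edges (i, j)) && (e != s.1)].
  move: (e_in); rewrite inE /= => /andP[/eqP nl_e /tnthP[m' j_e]].
  by exists (e, m'); [rewrite /sub_pair /= nl_e -j_e | apply: later].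
move: card_neq1; suff -> : pair_edges (i, j) = [set s.1] by rewrite cards1.
apply/setP => e; rewrite in_set1; have := none e; case: (eqVneq e s.1) => [->|neq] /=.
  by rewrite s_in.
by rewrite neq andbT.
Qed.

Lemma t1_next_occ_t3 (s : subedge L d) : is_t1 nl pl s ->
  exists2 s2, is_t3 nl pl s2 & prev_occ nl pl s2 = [set s].
Proof.
move=> t1; have [s' pair_eq lt_e] := t1_later_twin t1.
pose twin x := (sub_pair nl pl x == sub_pair nl pl s) && (x != s).
have twin_s' : twin s'.
  by rewrite /twin pair_eq eqxx; apply: contraTneq lt_e => ->; rewrite ltnn.
case: (arg_minnP (@sub_rank L d) twin_s') => s2 /andP[/eqP pair2 neq2] s2_min.
have lt2 : sub_rank s < sub_rank s2.
  have : s2 \notin prev_occ nl pl s by rewrite t1_prev_occ ?inE.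
  rewrite inE pair2 eqxx andbT -leqNgt leq_eqVlt => /orP[/eqP/sub_rank_inj eq_s|] //.
  by rewrite eq_s eqxx in neq2.
have prev2 : prev_occ nl pl s2 = [set s].
  apply/setP => x; rewrite !inE; case: (eqVneq x s) => [->|neq_x].
    by rewrite lt2 pair2 eqxx.
  apply/negbTE/andP => -[lt_x /eqP pair_x].
  by have := s2_min x; rewrite /twin pair_x pair2 eqxx neq_x leqNgt lt_x => /(_ isT).
exists s2 => //; rewrite /is_t3 prev2 cards1 eqxx andbT.
apply/andP; split; last by apply/forall_inP => x /set1P ->.
by apply/negP => /t1_prev_occ; rewrite prev2 => /setP/(_ s); rewrite !inE eqxx.
Qed.

Definition t1_subs := [set s : subedge L d | is_t1 nl pl s].
Definition t3_subs := [set s : subedge L d | is_t3 nl pl s].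

Lemma card_t1_le_t3 : #|t1_subs| <= #|t3_subs|.
Proof.
pose pick_prev x := odflt x [pick y in prev_occ nl pl x].
apply: leq_trans (leq_imset_card pick_prev _).
apply/subset_leq_card/subsetP => s; rewrite inE => t1.
have [s2 t3 prev2] := t1_next_occ_t3 t1.
apply/imsetP; exists s2; first by rewrite inE.
by rewrite /pick_prev prev2; case: pickP => [y /set1P -> | /(_ s)]; rewrite ?inE ?eqxx.
Qed.

(* A label used at n_k only sees the edges {p_k, n_k} and {n_k, p_(k+1)},
   so parity forces pl k and pl (ordS k) to hold the same labels. *)
Lemma nl_repeated k : [exists k', (k' != k) && (nl k' == nl k)].
Proof.
apply: contraT => /existsPn unique.
have only_k k' : (nl k' == nl k) = (k' == k).
  case: (eqVneq k' k) => [->|neq]; first by rewrite !eqxx.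
  by have := unique k'; rewrite neq /= => /negbTE.
have single b j : j \in edge_p pl (k, b) -> j \notin edge_p pl (k, ~~ b) ->
    pair_edges (nl k, j) = [set (k, b)].
  move=> in_b notin_nb; apply/setP => -[k' b']; rewrite !inE /edge_n only_k xpair_eqE /=.
  case: (eqVneq k' k) => [->|_]; last by [].
  by case: b b' in_b notin_nb => [] [] /= in_b /negbTE notin_nb; rewrite ?in_b ?notin_nb.
have same_labels : pl k =i pl (ordS k).
  move=> j; apply/idP/idP => j_in; apply/negPn/negP => j_notin.
  - by have := pair_edges_neq1 (nl k, j); rewrite (@single false) ?cards1.
  - by have := pair_edges_neq1 (nl k, j); rewrite (@single true) ?cards1.
have := uniq_perm (edge_p_uniq (k, false)) (edge_p_uniq (k, true)) same_labels.
by case: nb => _ _ /(_ k) /negP.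
Qed.

Lemma first_last_occ_disjoint : [disjoint first_occ nl & last_occ nl].
Proof.
rewrite -setI_eq0; apply/eqP/setP => k; rewrite !inE.
apply/negbTE/andP => -[/forallP first /forallP last].
have /existsP[k' /andP[neq /eqP nl_eq]] := nl_repeated k.
case: (ltngtP k' k) => [lt|gt|eq]; last by rewrite (val_inj eq) eqxx in neq.
- by have := first k'; rewrite lt nl_eq eqxx.
- by have := last k'; rewrite gt nl_eq eqxx.
Qed.

Definition fresh_p_edges : {set 'I_L} :=
  [set k | [exists m, is_t1 nl pl ((k, true), m)]].

Lemma fresh_p_edges_last_occ_disjoint : [disjoint fresh_p_edges & last_occ nl].
Proof.
rewrite -setI_eq0; apply/eqP/setP => k; rewrite !inE.
apply/negbTE/andP => -[/existsP[m t1] /forallP last].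
have [[[k' b'] m'] [nl_eq _]] := t1_later_twin t1; rewrite /edge_rank /= => lt.
move: nl_eq; rewrite /edge_n /= => nl_eq.
by have := last k'; rewrite nl_eq eqxx implybF -leqNgt; case: b' lt => /=; lia.
Qed.

Definition t4_subs := [set s : subedge L d | ~~ is_t1 nl pl s && ~~ is_t3 nl pl s].
Definition p_t1_subs := [set s : subedge L d | s.1.2 && is_t1 nl pl s].
Definition mixed_subs :=
  [set s : subedge L d | [&& s.1.2, s.1.1 \in fresh_p_edges & ~~ is_t1 nl pl s]].
Definition subs_over (b : bool) (A : {set 'I_L}) :=
  [set s : subedge L d | (s.1.2 == b) && (s.1.1 \in A)].

Lemma card_subs_over b A : #|subs_over b A| = #|A| * d.
Proof.
pose f (km : 'I_L * 'I_d) : subedge L d := ((km.1, b), km.2).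
have f_inj : injective f by move=> [? ?] [? ?] [-> ->].
rewrite -[d in RHS]card_ord -cardsT -cardsX -(card_imset _ f_inj).
apply: eq_card => -[[k b'] m]; rewrite inE /=; apply/idP/imsetP => [/andP[/eqP-> k_in] | ].
  by exists (k, m); rewrite // !inE k_in.
by case=> -[k0 m0]; rewrite !inE andbT /f => k0_in [-> -> _]; rewrite eqxx.
Qed.

Lemma is_t1_n_edge k m : is_t1 nl pl ((k, false), m) = (k \in first_occ nl).
Proof. by rewrite inE. Qed.

Lemma card_t1_lower : #|first_occ nl| * d + #|p_t1_subs| <= #|t1_subs|.
Proof.
rewrite -(card_subs_over false); apply: leq_card_disjointU.
  by rewrite -setI_eq0; apply/eqP/setP => -[[k [] m]]; rewrite !inE ?andbF.
apply/subsetP => -[[k b] m]; rewrite !inE /= => /orP[/andP[/eqP b0 k_first] | /andP[_ //]].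
by rewrite b0 is_t1_n_edge inE.
Qed.

Lemma card_mixed : #|mixed_subs| + #|p_t1_subs| <= #|fresh_p_edges| * d.
Proof.
rewrite -(card_subs_over true); apply: leq_card_disjointU.
  by rewrite -setI_eq0; apply/eqP/setP => s; rewrite !inE; case: (is_t1 _ _ _); rewrite ?andbF.
apply/subsetP => -[[k b] m]; rewrite !inE /= => /orP[/and3P[-> -> _] // | /andP[-> t1]].
by apply/existsP; exists m.
Qed.

Lemma card_t1_t3_t4 : #|t1_subs| + #|t3_subs| + #|t4_subs| = L * 2 * d.
Proof.
have disj : [disjoint t1_subs & t3_subs].
  by rewrite -setI_eq0; apply/eqP/setP => s; rewrite !inE /is_t3; case: (is_t1 _ _ _).
have -> : t4_subs = ~: (t1_subs :|: t3_subs) by apply/setP => s; rewrite !inE negb_or.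
by rewrite -cardsU_disjoint // cardsC !card_prod card_bool !card_ord.
Qed.

Lemma num_T4_le : num_T4 nl pl <= #|t4_subs| + #|mixed_subs|.
Proof.
apply: leq_trans (leq_add (leq_imset_card fst t4_subs) (leq_imset_card fst mixed_subs)).
apply: leq_trans (leq_card_setU _ _); apply/subset_leq_card/subsetP => e.
rewrite inE /is_T4 => /andP[/forallPn[m1 not_t1] /forallPn[m2 not_t3]].
have [/existsP[m t4] | no_t4] := boolP [exists m, (e, m) \in t4_subs].
  by apply/setUP; left; apply/imsetP; exists (e, m).
have t1_m2 : is_t1 nl pl (e, m2).
  by move/existsPn: no_t4 => /(_ m2); rewrite inE not_t3 andbT negbK.
apply/setUP; right; apply/imsetP; exists (e, m1) => //; rewrite inE not_t1 andbT.
case: e not_t1 t1_m2 {no_t4 not_t3} => k [] not_t1 t1_m2 /=.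
  by rewrite inE; apply/existsP; exists m2.
by rewrite is_t1_n_edge -(is_t1_n_edge k m2) t1_m2 in not_t1.
Qed.

Lemma c_tilde_le : 0 < L -> c_tilde pl <= d + #|p_t1_subs|.
Proof.
move=> L_gt0; pose k0 := Ordinal L_gt0.
pose label (s : subedge L d) := tnth (edge_p pl s.1) s.2.
apply: (@leq_trans #|[set j | j \in pl k0] :|: label @: p_t1_subs|).
  apply/subset_leq_card/subsetP => j; rewrite inE => /existsP[k j_in].
  rewrite in_setU inE; case: (boolP (j \in pl k0)) => //= j_notin0.
  case: (@arg_minnP _ k (fun x => j \in pl x) val j_in) => k1 j_in1 k1_min.
  have k1_gt0 : 0 < k1.
    by rewrite lt0n; apply: contraNneq j_notin0 => k1_0; rewrite (_ : k0 = k1) //; apply: val_inj.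
  have k1_pred : k1.-1 < L by rewrite prednK ?ltn_ord // ltnW.
  pose kk := Ordinal k1_pred.
  have ordS_kk : ordS kk = k1 by apply: val_inj; rewrite /= prednK // modn_small.
  have /tnthP[m j_m] := j_in1.
  apply/imsetP; exists ((kk, true), m); last by rewrite /label /edge_p /= ordS_kk j_m.
  rewrite inE /= /is_t1 /edge_p /= ordS_kk -j_m; apply/forall_inP => k' le_k'.
  by apply: contraTN le_k' => /k1_min; rewrite -ltnNge /=; lia.
apply: leq_trans (leq_card_setU _ _) _; apply: leq_add (leq_imset_card _ _).
by rewrite cardsE; apply: leq_trans (card_size _) _; rewrite size_tuple.
Qed.

Lemma double_r_tilde_le : 2 * r_tilde nl <= L.
Proof.
have := leq_card_disjointU first_last_occ_disjoint (subsetT _); rewrite cardsT card_ord.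
apply: leq_trans; rewrite mul2n -addnn.
exact: leq_add (card_image_le_first_occ nl) (card_image_le_last_occ nl).
Qed.

Lemma num_T4_le_t1 :
  num_T4 nl pl + 2 * (#|first_occ nl| * d) + 3 * #|p_t1_subs|
    <= 2 * (L * d) + #|fresh_p_edges| * d.
Proof.
have := num_T4_le; have := card_t1_t3_t4; have := card_t1_le_t3.
have := card_t1_lower; have := card_mixed.
by rewrite mulnAC; lia.
Qed.

Lemma num_T4_bound : 0 < L ->
  num_T4 nl pl + 12 * c_tilde pl + 12 * (r_tilde nl * d) <= 12 * (d * (L + 1)).
Proof.
move=> L_gt0.
have r_first : r_tilde nl <= #|first_occ nl| := card_image_le_first_occ nl.
have r_last : r_tilde nl <= #|last_occ nl| := card_image_le_last_occ nl.
have fresh_last : #|fresh_p_edges| + #|last_occ nl| <= L.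
  have := leq_card_disjointU fresh_p_edges_last_occ_disjoint (subsetT _).
  by rewrite cardsT card_ord.
have := num_T4_le_t1; have := card_mixed; have := c_tilde_le L_gt0.
(* 12 c_tilde <= 12 d + 12 #p_t1 and #p_t1 <= #fresh_p_edges * d <= (L - r_tilde) d *)
nia.
Qed.

End Labelling.

Local Open Scope ring_scope.

Theorem proposition6p3 (d ell L n p : nat)
    (nl : 'I_L -> 'I_n) (pl : 'I_L -> d.-tuple 'I_p) :
  (0 < d)%N -> (d <= ell)%N -> (2 <= L)%N ->
  nb_multilabelling nl pl ->
  ((num_T4 nl pl)%:R : rat) <= 12%:R * Delta_bar nl pl ell * ell%:R.
Proof.
move=> d_gt0 d_le_ell L_ge2 nb.
have ell_neq0 : ell%:R != 0 :> rat by rewrite pnatr_eq0 -lt0n (leq_trans d_gt0 d_le_ell).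
have -> : 12%:R * Delta_bar nl pl ell * ell%:R
    = (12 * ell + 6 * L * ell + 6 * d * L)%:R - (12 * r_tilde nl * ell + 12 * c_tilde pl)%:R.
  by rewrite /Delta_bar (natrM _ 2 ell) !natrD !natrM; field.
rewrite lerBrDr -natrD ler_nat.
have := num_T4_bound nb (ltnW L_ge2); have := double_r_tilde_le nb.
(* the remaining gap is 6 (ell - d) (L + 2 - 2 r_tilde) >= 0 *)
by nia.
Qed.
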